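(* Let $n\ge 2$, let $M_n=\{1,2,\dots,n\}$, and let $\mathcal{F}\subset 2^{M_n}$ be a union-closed family (i.e. $A\cup B\in\mathcal{F}$ whenever $A,B\in\mathcal{F}$) with $\bigcup_{A\in\mathcal{F}}A=M_n$. Fix $i\in M_n$ and put $\mathcal{G}=\{A\setminus\{i\}: A\in\mathcal{F}\}$. Fix $j\in M_n\setminus\{i\}$ and let $\mathcal{G}_j=\{A\in\mathcal{G}: j\in A\}$ and $\mathcal{F}_j=\{A\in\mathcal{F}: j\in A\}$. If $\frac{|\mathcal{G}_j|}{|\mathcal{G}|}\ge c$ for some constant $c\in(0,1]$, then $$\frac{|\mathcal{F}_j|}{|\mathcal{F}|}\ge \frac{1}{1+2(1-c)/c}.$$
   Context: $|X|$ denotes the cardinality of a set $X$; $2^{M_n}$ is the power set of $M_n$. Note $\mathcal{G}$ is a set of sets, so $|\mathcal{G}|$ counts distinct sets $A\setminus\{i\}$. *)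

From mathcomp Require Import all_boot all_order all_algebra.
Set Implicit Arguments. Unset Strict Implicit. Unset Printing Implicit Defensive.

(* Ground set M_n = {1,...,n} is encoded as 'I_n = {0,...,n-1}. *)
Definition union_closed (T : finType) (F : {set {set T}}) : Prop :=
  forall A B, A \in F -> B \in F -> A :|: B \in F.

From mathcomp Require Import all_boot all_order all_algebra.
From mathcomp Require Import lra zify.
Import Order.TTheory GRing.Theory Num.Theory.
Local Open Scope ring_scope.

(* Deleting i maps the sets of F containing j onto those of G containing j,
   and maps the sets of F avoiding j onto those of G avoiding j at most
   two-to-one (the fibre over B lies in {B, B ∪ {i}}).  Hence |Gj| <= |Fj| and
   |F| - |Fj| <= 2 (|G| - |Gj|) <= 2 (1 - c) / c |Gj|, which gives the bound. *)

Lemma card_sep_partition (T : finType) (S : {set T}) (p : pred T) :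
  (#|[set x in S | p x]| + #|[set x in S | ~~ p x]|)%N = #|S|.
Proof.
rewrite -(cardsID [set x | p x] S) !setIdE; congr (_ + #|_|)%N.
by rewrite setDE; congr (_ :&: _); apply/setP => x; rewrite !inE.
Qed.

Lemma imset_sep (T : finType) (f : T -> T) (p : pred T) (S : {set T}) :
  (forall x, p (f x) = p x) ->
  [set y in f @: S | p y] = f @: [set x in S | p x].
Proof.
move=> pf; apply/setP => y; apply/idP/imsetP.
  rewrite inE => /andP[/imsetP[x Sx ->]]; rewrite pf => px.
  by exists x; rewrite ?inE ?Sx.
by case=> x; rewrite inE => /andP[Sx px] ->; rewrite inE imset_f //= pf.
Qed.

Lemma card_le_double_imsetD1 (T : finType) (x : T) (S : {set {set T}}) :
  (#|S| <= 2 * #|[set A :\ x | A in S]|)%N.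
Proof.
set H := [set A :\ x | A in S].
have cover : S \subset H :|: [set x |: B | B in H].
  apply/subsetP => A SA; have HAx : A :\ x \in H by exact: imset_f.
  rewrite in_setU; case xA: (x \in A).
    by apply/orP; right; apply/imsetP; exists (A :\ x); rewrite ?setD1K.
  have /setDidPl AxA : [disjoint A & [set x]] by rewrite disjoint_sym disjoints1 xA.
  by rewrite -AxA HAx.
apply: leq_trans (subset_leq_card cover) _.
apply: leq_trans (leq_card_setU _ _) _.
by rewrite mul2n -addnn leq_add2l leq_imset_card.
Qed.

Section DeleteOnePoint.

Variables (T : finType) (i j : T) (F : {set {set T}}).
Hypothesis ji : j != i.

Let G := [set A :\ i | A in F].

Let memD1 (A : {set T}) : (j \in A :\ i) = (j \in A).
Proof. by rewrite in_setD1 ji. Qed.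

Lemma card_sep_imsetD1_le :
  (#|[set B in G | j \in B]| <= #|[set A in F | j \in A]|)%N.
Proof.
rewrite (@imset_sep _ _ (fun B : {set T} => j \in B)) => [|A]; last exact: memD1.
exact: leq_imset_card.
Qed.

Lemma card_sep_imsetD1_defect :
  (#|F| + 2 * #|[set B in G | j \in B]| <= #|[set A in F | j \in A]| + 2 * #|G|)%N.
Proof.
have avoid : (#|[set A in F | j \notin A]| <= 2 * #|[set B in G | j \notin B]|)%N.
  rewrite (@imset_sep _ _ (fun B : {set T} => j \notin B)) => [|A]; last by rewrite memD1.
  exact: card_le_double_imsetD1.
have := card_sep_partition _ F (fun A => j \in A).
have := card_sep_partition _ G (fun B => j \in B).
lia.
Qed.

End DeleteOnePoint.

Lemma ratio_lower_bound (R : realFieldType) (c f fj g gj : R) :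
  0 < c -> c <= 1 -> 0 < f -> c * g <= gj -> gj <= fj ->
  f + 2 * gj <= fj + 2 * g ->
  1 / (1 + 2 * (1 - c) / c) <= fj / f.
Proof.
move=> c0 c1 f0 cg gjfj hf.
rewrite -mulrA; set d := (1 - c) / c.
have dc : d * c = 1 - c by rewrite /d divfK ?gt_eqF.
have d0 : 0 <= d by rewrite divr_ge0 ?subr_ge0 // ltW.
have X0 : 0 < 1 + 2 * d by lra.
have gd : g <= (1 + d) * gj.
  by rewrite -(ler_pM2l c0) mulrA mulrDr mulr1 [c * d]mulrC dc; lra.
rewrite ler_pdivrMr // mulrAC ler_pdivlMr // mul1r.
nra.
Qed.

Theorem lemma1p1 (R : realFieldType) (n : nat) (F : {set {set 'I_n}})
    (i j : 'I_n) (c : R) :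
  (2 <= n)%N ->
  union_closed F ->
  \bigcup_(A in F) A = [set: 'I_n] ->
  j != i ->
  0 < c -> c <= 1 ->
  let G := [set A :\ i | A in F] in
  let Gj := [set A in G | j \in A] in
  let Fj := [set A in F | j \in A] in
  c <= #|Gj|%:R / #|G|%:R ->
  1 / (1 + 2 * (1 - c) / c) <= #|Fj|%:R / #|F|%:R.
Proof.
move=> _ _ coverF ji c0 c1 G Gj Fj hc.
have F_neq0 : F != set0.
  apply: contraTneq isT => F0; move/setP/(_ i): coverF.
  by rewrite F0 big_set0 in_set0 in_setT.
have G_gt0 : (0 < #|G|)%N by rewrite card_gt0 imset_eq0.
apply: (ratio_lower_bound _ _ _ _ #|G|%:R #|Gj|%:R) => //.
- by rewrite ltr0n card_gt0.
- by rewrite -ler_pdivlMr ?ltr0n.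
- by rewrite ler_nat card_sep_imsetD1_le.
- by rewrite -!natrM -!natrD ler_nat card_sep_imsetD1_defect.
Qed.
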